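(* Let $\pi$ be a projective plane of order $q$ and let $n>1$ be a natural number. Then any embedding $\phi$ of the complete bipartite graph $K_{s,t}$ into $\pi$, where $s\ge q-n$ and $t>n^2+n+1$, maps the vertex class of size $t$ to a set of points lying on a single line.
   Context: A finite projective plane of order $q$ has $q^2+q+1$ points and lines, $q+1$ points on each line and $q+1$ lines through each point; any two distinct points lie on a unique line and any two lines meet in a unique point. An embedding of a simple graph $G=(V,E)$ into $\pi$ is an injective map $\phi$ from $V$ to the points of $\pi$ such that the induced map sending an edge $ab$ to the line through $\phi(a),\phi(b)$ is injective on $E$. *)

From mathcomp Require Import all_boot.
Set Implicit Arguments. Unset Strict Implicit. Unset Printing Implicit Defensive.

Definition proj_plane (q : nat) (P L : finType) (inc : P -> L -> bool) : Prop :=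
  [/\ #|P| = q ^ 2 + q + 1 /\ #|L| = q ^ 2 + q + 1,
      (forall l : L, #|[set x | inc x l]| = q + 1),
      (forall x : P, #|[set l | inc x l]| = q + 1),
      (forall x y : P, x != y -> exists! l : L, inc x l && inc y l) &
      (forall l m : L, l != m -> exists! x : P, inc x l && inc x m)].

Definition line_through (P L : finType) (inc : P -> L -> bool) (a b : P) (l : L) :=
  inc a l && inc b l.

(* Embedding of a simple graph (V, e) into the plane: phi is injective on
   vertices, and the induced map sending the edge ab to the line through
   phi a, phi b is injective on edges: if edges ab and cd are sent to the
   same line l, then {a,b} = {c,d}. *)
Definition graph_embedding (V P L : finType) (e : rel V)
    (inc : P -> L -> bool) (phi : V -> P) : Prop :=
  injective phi /\
  (forall (a b c d : V) (l : L), e a b -> e c d ->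
     line_through inc (phi a) (phi b) l -> line_through inc (phi c) (phi d) l ->
     ((a == c) && (b == d)) || ((a == d) && (b == c))).

Definition Kst_rel (s t : nat) : rel ('I_s + 'I_t)%type :=
  fun u v => match u, v with
             | inl _, inr _ => true
             | inr _, inl _ => true
             | _, _ => false
             end.

From mathcomp Require Import all_boot.
From mathcomp Require Import zify.

Set Implicit Arguments.
Unset Strict Implicit.
Unset Printing Implicit Defensive.

(* Write A and B for the images of the two vertex classes.  The embedding says
   that a line through a point of A contains at most one point of B and vice
   versa.  The lines through a point b of B are then the |A| lines joining b
   to A, plus at most q + 1 - |A| <= n + 1 "secants" joining b to other points
   of B.  A line l missing some c in B contains at most n + 1 points of B,
   since projecting them from c gives distinct secants through c.  If no line
   contains B, the n + 1 secants through one b in B thus cover the other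
   points of B at most n at a time, so |B| <= n (n + 1) + 1. *)

Lemma card_le_cover (I J : finType) (X : {set I}) (M : {set J})
    (R : I -> J -> bool) (k : nat) :
  (forall x, x \in X -> exists2 m, m \in M & R x m) ->
  (forall m, m \in M -> #|[set x in X | R x m]| <= k) ->
  #|X| <= #|M| * k.
Proof.
move=> covered small.
have sub_cup : X \subset \bigcup_(m in M) [set x in X | R x m].
  apply/subsetP => x xX; have [m mM xm] := covered x xX.
  by apply/bigcupP; exists m; rewrite // inE xX.
apply: leq_trans (subset_leq_card sub_cup) _.
rewrite -sum_nat_const.
elim/big_rec2: _ => [|m k' A mM le_A]; first by rewrite cards0.
apply: leq_trans (leq_card_setU _ _) _.
exact: leq_add (small m mM) le_A.
Qed.

Section LinearSpace.

Variables (P L : finType) (inc : P -> L -> bool) (q : nat).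
Hypothesis join_unique : forall x y : P, x != y -> exists! l : L, inc x l && inc y l.
Hypothesis card_pencil : forall x : P, #|[set l | inc x l]| = q + 1.

Definition points_on (l : L) (X : {set P}) : {set P} := [set x in X | inc x l].

Lemma exists_join {x y : P} : x != y -> exists l, inc x l && inc y l.
Proof. by case/join_unique => l []; exists l. Qed.

Lemma join_eq {x y : P} {l m : L} :
  x != y -> inc x l -> inc y l -> inc x m -> inc y m -> l = m.
Proof.
move=> /join_unique [l' [_ uniq_l']] xl yl xm ym.
by rewrite -(uniq_l' l) ?xl ?yl // -(uniq_l' m) ?xm ?ym.
Qed.

Lemma card_meet_le1 (l m : L) (X : {set P}) :
  l != m -> #|[set x in points_on l X | inc x m]| <= 1.
Proof.
move=> lm; apply/card_le1_eqP => x y; rewrite !inE.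
case/andP => /andP [_ xl] xm /andP [/andP [_ yl] ym].
case: (eqVneq y x) => // yx.
by rewrite (join_eq yx yl xl ym xm) eqxx in lm.
Qed.

Variables (A B : {set P}).
Hypothesis disjoint_AB : [disjoint A & B].
Hypothesis A_line_le1 :
  forall (x : P) (l : L), x \in A -> inc x l -> #|points_on l B| <= 1.
Hypothesis B_line_le1 :
  forall (y : P) (l : L), y \in B -> inc y l -> #|points_on l A| <= 1.

Definition secants (b : P) : {set L} :=
  [set l | inc b l & [exists y in B :\ b, inc y l]].

Lemma card_secants {b : P} : b \in B -> #|secants b| + #|A| <= q + 1.
Proof.
move=> bB.
pose tangents := [set l | inc b l & [exists x in A, inc x l]].
have le_A : #|A| <= #|tangents| * 1.
  apply: (card_le_cover (R := inc)) => [x xA|l].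
    have xb : x != b by apply: contraTneq bB => <-; rewrite (disjointFr disjoint_AB).
    have [l /andP [xl bl]] := exists_join xb.
    by exists l; rewrite // inE bl; apply/existsP; exists x; rewrite xA.
  rewrite inE => /andP [bl _].
  exact: B_line_le1 bB bl.
have disj : [disjoint tangents & secants b].
  apply/pred0P => l; rewrite /= !inE; apply/negP.
  case/andP => /andP [bl /existsP [x /andP [xA xl]]] /andP [_ /existsP [y]].
  rewrite !inE => /andP [/andP [yb yB] yl].
  have := A_line_le1 xA xl; apply/negP; rewrite -ltnNge.
  by apply/card_gt1P; exists y, b; rewrite !inE yB yl bB bl yb.
have sub : tangents :|: secants b \subset [set l | inc b l].
  by apply/subsetP => l; rewrite !inE => /orP [] /andP [].
have := subset_leq_card sub; rewrite card_pencil.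
move: (leq_card_setU tangents (secants b)); rewrite disj => /leqifP /eqP ->.
by rewrite addnC; apply: leq_trans; rewrite leq_add2l -[leqRHS]muln1.
Qed.

Lemma card_points_on_le_secants {c : P} {l : L} :
  c \in B -> ~~ inc c l -> #|points_on l B| <= #|secants c|.
Proof.
move=> cB cl; rewrite -[leqRHS]muln1.
apply: (card_le_cover (R := inc)) => [y|m].
  rewrite inE => /andP [yB yl].
  have cy : c != y by apply: contraNneq cl => ->.
  have [m /andP [cm ym]] := exists_join cy.
  by exists m; rewrite // inE cm; apply/existsP; exists y; rewrite !inE yB ym eq_sym cy.
rewrite inE => /andP [cm _]; apply: card_meet_le1.
by apply: contraNneq cl => ->.
Qed.

Lemma collinear_of_large (n : nat) :
  q - n <= #|A| -> n ^ 2 + n + 1 < #|B| -> exists l, forall y, y \in B -> inc y l.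
Proof.
move=> large_A large_B.
have secants_le c : c \in B -> #|secants c| <= n.+1.
  by move=> cB; have := card_secants cB; lia.
have [l Bl | no_line] := pickP (fun l => [forall y in B, inc y l]).
  by exists l => y yB; move/forall_inP: Bl; apply.
exfalso; have [b bB] : exists b, b \in B by apply/card_gt0P; lia.
have other_le m : m \in secants b -> #|[set y in B :\ b | inc y m]| <= n.
  rewrite inE => /andP [bm _].
  have [c /andP [cB cm]] : exists c, (c \in B) && ~~ inc c m.
    by apply/existsP; rewrite -negb_forall_in no_line.
  have := leq_trans (card_points_on_le_secants cB cm) (secants_le c cB).
  rewrite (cardsD1 b) [b \in _]inE bB bm add1n ltnS; apply: leq_trans.
  by apply/subset_leq_card/subsetP => y; rewrite !inE => /andP [/andP [-> ->] ->].
have covered y : y \in B :\ b -> exists2 m, m \in secants b & inc y m.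
  rewrite 2!inE => /andP [yb yB].
  have [m /andP [ym bm]] := exists_join yb.
  by exists m; rewrite // inE bm; apply/existsP; exists y; rewrite !inE yb yB.
have := card_le_cover covered other_le.
rewrite (cardsD1 b) bB in large_B.
have := secants_le b bB; nia.
Qed.

End LinearSpace.

Section KstEmbedding.

Variables (s t : nat) (P L : finType) (inc : P -> L -> bool).
Variable phi : ('I_s + 'I_t)%type -> P.
Hypothesis phi_emb : graph_embedding (@Kst_rel s t) inc phi.

Let A := [set phi (inl i) | i : 'I_s].
Let B := [set phi (inr j) | j : 'I_t].

Lemma Kst_line_inl_le1 (x : P) (l : L) :
  x \in A -> inc x l -> #|points_on inc l B| <= 1.
Proof.
case/imsetP => i _ -> il; apply/card_le1_eqP => y y'; rewrite !inE.
case/andP => /imsetP [j _ ->] jl /andP [/imsetP [j' _ ->] j'l].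
have := phi_emb.2 (inl i) (inr j) (inl i) (inr j') l isT isT.
rewrite /line_through il jl j'l => /(_ isT isT).
by rewrite eqxx /= orbF => /eqP [->].
Qed.

Lemma Kst_line_inr_le1 (y : P) (l : L) :
  y \in B -> inc y l -> #|points_on inc l A| <= 1.
Proof.
case/imsetP => j _ -> jl; apply/card_le1_eqP => x x'; rewrite !inE.
case/andP => /imsetP [i _ ->] il /andP [/imsetP [i' _ ->] i'l].
have := phi_emb.2 (inl i) (inr j) (inl i') (inr j) l isT isT.
rewrite /line_through il jl i'l => /(_ isT isT).
by rewrite eqxx /= andbT orbF => /eqP [->].
Qed.

End KstEmbedding.

Theorem corollary4p5 (q n s t : nat) (P L : finType) (inc : P -> L -> bool)
    (phi : ('I_s + 'I_t)%type -> P) :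
  proj_plane q inc ->
  1 < n ->
  q - n <= s ->
  n ^ 2 + n + 1 < t ->
  graph_embedding (@Kst_rel s t) inc phi ->
  exists l : L, forall j : 'I_t, inc (phi (inr j)) l.
Proof.
move=> [_ _ card_pencil join_unique _] _ large_s large_t phi_emb.
have phi_inj := phi_emb.1.
pose A := [set phi (inl i) | i : 'I_s]; pose B := [set phi (inr j) | j : 'I_t].
have cardA : #|A| = s by rewrite card_imset ?card_ord // => i i' /phi_inj [].
have cardB : #|B| = t by rewrite card_imset ?card_ord // => j j' /phi_inj [].
have disjAB : [disjoint A & B].
  apply/pred0P => x /=; apply/negP.
  by case/andP => /imsetP [i _ ->] /imsetP [j _ /phi_inj].
have [||l Bl] := collinear_of_large join_unique card_pencil disjAB
  (Kst_line_inl_le1 phi_emb) (Kst_line_inr_le1 phi_emb) (n := n).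
- by rewrite cardA.
- by rewrite cardB.
by exists l => j; apply/Bl/imset_f.
Qed.
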